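(* Let $p$ be a random joint choice rule on a finite set $X$, with Möbius inverse $q$. A distribution $\nu\in\Delta(\mathcal{L}(X))$ and a transition function $t$ are a consumption dependent random utility representation of $p$, i.e. $$p(x,y,A,B)=\sum_{\succ\in N(x,A)}\sum_{\succ'\in N(y,B)}\nu(\succ)\,t_{\succ'}(x,\succ)\quad\text{for all } A,B\in\mathcal{X},\ (x,y)\in A\times B,$$ if and only if for all $A,B\in\mathcal{X}$ and all $(x,y)\in A\times B$, $$q(x,y,A,B)=\sum_{\succ\in I(x,A)}\sum_{\succ'\in I(y,B)}\nu(\succ)\,t_{\succ'}(x,\succ).$$
   Context: $X$ is finite, $\mathcal{X}$ the nonempty subsets of $X$, $\mathcal{L}(X)$ the linear orders on $X$. $N(x,A)=\{\succ: x\succ y\ \forall y\in A\setminus\{x\}\}$ and $I(x,A)=\{\succ : z\succ x\ \forall z\in X\setminus A,\ x\succ y\ \forall y\in A\setminus\{x\}\}$. A transition function is any map $t:X\times\mathcal{L}(X)\to\Delta(\mathcal{L}(X))$, with $t_{\succ'}(x,\succ)$ the probability of $\succ'$ under $t(x,\succ)$. A random joint choice rule assigns to each $A,B\in\mathcal{X}$ and $(x,y)\in A\times B$ a number $p(x,y,A,B)\ge 0$ with $\sum_{x\in A}\sum_{y\in B}p(x,y,A,B)=1$. Its Möbius inverse $q$ is the unique function with $p(x,y,A,B)=\sum_{A\subseteq A'\subseteq X}\sum_{B\subseteq B'\subseteq X}q(x,y,A',B')$ for all such $(x,y,A,B)$. *)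

From HB Require Import structures.
From mathcomp Require Import all_boot all_order all_algebra.
Set Implicit Arguments. Unset Strict Implicit. Unset Printing Implicit Defensive.
Import Order.TTheory GRing.Theory Num.Theory.
Local Open Scope ring_scope.

Section Defs.
Variable X : finType.

Definition is_linord (r : {ffun X -> {ffun X -> bool}}) : bool :=
  [&& [forall x, ~~ r x x],
      [forall x, forall y, forall z, r x y && r y z ==> r x z] &
      [forall x, forall y, (x != y) ==> r x y || r y x]].

Definition linord := {r : {ffun X -> {ffun X -> bool}} | is_linord r}.

(* succ r x y  means  x ≻ y  under the order r *)
Definition succ (r : linord) (x y : X) : bool := val r x y.

Definition Nset (x : X) (A : {set X}) : pred linord :=
  fun r => [forall y, (y \in A) && (y != x) ==> succ r x y].

Definition Iset (x : X) (A : {set X}) : pred linord :=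
  fun r => [forall z, (z \notin A) ==> succ r z x] &&
           [forall y, (y \in A) && (y != x) ==> succ r x y].

Variable R : realFieldType.

Definition is_rjcr (p : X -> X -> {set X} -> {set X} -> R) : Prop :=
  (forall (A B : {set X}) x y, x \in A -> y \in B -> 0 <= p x y A B) /\
  (forall A B : {set X}, A != set0 -> B != set0 ->
     \sum_(x in A) \sum_(y in B) p x y A B = 1).

Definition is_mobius_inverse (p q : X -> X -> {set X} -> {set X} -> R) : Prop :=
  forall (A B : {set X}) x y, x \in A -> y \in B ->
    p x y A B = \sum_(A' : {set X} | A \subset A')
                  \sum_(B' : {set X} | B \subset B') q x y A' B'.

Definition is_dist (nu : linord -> R) : Prop :=
  (forall r, 0 <= nu r) /\ \sum_(r : linord) nu r = 1.

(* t : X × L(X) → Δ(L(X)); t x r r' = t_{r'}(x, r) *)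
Definition is_transition (t : X -> linord -> linord -> R) : Prop :=
  forall x r, is_dist (t x r).

End Defs.

(* A linear order ≻ ranks x first in A exactly when A is contained in the
   down-set D(≻, x) = {z | not z ≻ x} of x, and ≻ lies in I(x, A') exactly
   when A' = D(≻, x).  Hence N(x, A) is the disjoint union of the I(x, A') over
   A' ⊇ A, so the N-representation of p is the double superset sum of the
   I-representation.  As q is tied to p by the same superset sums, and superset
   sums are injective on up-closed families of sets (Möbius inversion, by
   induction on the size of the complement), the two representations are
   equivalent. *)

From HB Require Import structures.
From mathcomp Require Import all_boot all_order all_algebra.
Import Order.TTheory GRing.Theory Num.Theory.
Local Open Scope ring_scope.

Section SupersetSums.
Variables (T : finType) (R : zmodType).

Definition up_closed (P : pred {set T}) :=
  forall A A' : {set T}, A \subset A' -> P A -> P A'.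

Lemma supset_sum_eq0 (P : pred {set T}) (f : {set T} -> R) :
  up_closed P ->
  (forall A, P A -> \sum_(A' : {set T} | A \subset A') f A' = 0) ->
  forall A, P A -> f A = 0.
Proof.
move=> upP f_sum0 A; elim: {A}_.+1 {-2}A (ltnSn #|~: A|) => // n IH A ltAn PA.
have := f_sum0 A PA; rewrite (bigD1 A) //= big1 ?addr0 // => A' /andP[sAA' neA'A].
apply: IH; last exact: upP sAA' PA.
have ltCA : ~: A' \proper ~: A by rewrite properC properEneq eq_sym neA'A.
exact: leq_trans (proper_card ltCA) _.
Qed.

Lemma supset_sum2_eq0 (P Q : pred {set T}) (f : {set T} -> {set T} -> R) :
  up_closed P -> up_closed Q ->
  (forall A B, P A -> Q B ->
     \sum_(A' : {set T} | A \subset A') \sum_(B' : {set T} | B \subset B') f A' B' = 0) ->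
  forall A B, P A -> Q B -> f A B = 0.
Proof.
move=> upP upQ f_sum0 A B PA QB.
apply: (@supset_sum_eq0 Q (f A) upQ) => // B' QB'.
apply: (@supset_sum_eq0 P (fun A' => \sum_(B'' : {set T} | B' \subset B'') f A' B'') upP _ A PA).
by move=> A' PA'; apply: f_sum0.
Qed.

Lemma up_closed_mem (x : T) : up_closed [pred A : {set T} | x \in A].
Proof. by move=> A A' /subsetP sAA' /sAA'. Qed.

End SupersetSums.

Section LinearOrders.
Variable X : finType.
Implicit Types (r : linord X) (x y z : X) (A B : {set X}).

Lemma succ_irr r x : ~~ succ r x x.
Proof. by case/and3P: (valP r) => /forallP/(_ x). Qed.

Lemma succ_trans {r x y z} : succ r x y -> succ r y z -> succ r x z.
Proof.
case/and3P: (valP r) => _ /forallP/(_ x)/forallP/(_ y)/forallP/(_ z) trans _.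
by move=> rxy ryz; apply: (implyP trans); apply/andP.
Qed.

Lemma succ_total r x y : x != y -> succ r x y || succ r y x.
Proof. by case/and3P: (valP r) => _ _ /forallP/(_ x)/forallP/(_ y)/implyP. Qed.

Lemma succ_asym r x y : succ r x y -> ~~ succ r y x.
Proof. by move=> rxy; apply/negP => /(succ_trans rxy); rewrite (negbTE (succ_irr r x)). Qed.

Lemma not_succ_succ r x y : x != y -> ~~ succ r y x -> succ r x y.
Proof. by move=> /(succ_total r); case: (succ r y x); rewrite ?orbF. Qed.

Definition downset r x : {set X} := [set z | ~~ succ r z x].

Lemma in_downset r x z : x != z -> (z \in downset r x) = succ r x z.
Proof.
by rewrite inE => nexz; apply/idP/idP; [exact: not_succ_succ | exact: succ_asym].
Qed.

Lemma Nset_downset x A r : x \in A -> Nset x A r = (A \subset downset r x).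
Proof.
move=> xA; apply/forallP/subsetP => [firstA z zA | sAD z].
  have [<-|nexz] := eqVneq x z; first by rewrite inE succ_irr.
  by rewrite in_downset //; apply: (implyP (firstA z)); rewrite zA eq_sym.
apply/implyP => /andP[zA nezx]; rewrite -in_downset 1?eq_sym //; exact: sAD.
Qed.

Lemma Iset_downset x A r : Iset x A r = (A == downset r x).
Proof.
apply/andP/eqP => [[/forallP aboveA /forallP firstA] | ->].
  have xA : x \in A.
    by apply: contraT => /(implyP (aboveA x)); rewrite (negbTE (succ_irr r x)).
  apply/setP => z; have [<-|nexz] := eqVneq x z.
    by rewrite inE succ_irr xA.
  rewrite in_downset //; case zA: (z \in A).
    by apply/esym/(implyP (firstA z)); rewrite zA eq_sym.
  by apply/esym/negbTE/succ_asym/(implyP (aboveA z)); rewrite zA.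
split; apply/forallP => z; apply/implyP.
  by rewrite inE negbK.
by case/andP=> zD nezx; rewrite -in_downset 1?eq_sym.
Qed.

Lemma sum_Nset (R : nmodType) x A (F : linord X -> R) : x \in A ->
  \sum_(r | Nset x A r) F r =
  \sum_(A' : {set X} | A \subset A') \sum_(r | Iset x A' r) F r.
Proof.
move=> xA; under eq_bigl do rewrite Nset_downset //.
rewrite (partition_big (downset^~ x) (fun A' => A \subset A')) //=.
apply: eq_bigr => A' sAA'; apply: eq_bigl => r.
by rewrite Iset_downset [A' == _]eq_sym andb_idl // => /eqP ->.
Qed.

Lemma sum_Nset2 (R : nmodType) x y A B (F : linord X -> linord X -> R) :
  x \in A -> y \in B ->
  \sum_(r | Nset x A r) \sum_(r' | Nset y B r') F r r' =
  \sum_(A' : {set X} | A \subset A') \sum_(B' : {set X} | B \subset B')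
    \sum_(r | Iset x A' r) \sum_(r' | Iset y B' r') F r r'.
Proof.
move=> xA yB; under eq_bigr do rewrite (@sum_Nset _ _ _ _ yB).
rewrite exchange_big [RHS]exchange_big /=; apply: eq_bigr => B' _.
exact: sum_Nset.
Qed.

End LinearOrders.

Theorem theorem4 (X : finType) (R : realFieldType)
  (p q : X -> X -> {set X} -> {set X} -> R)
  (nu : linord X -> R) (t : X -> linord X -> linord X -> R) :
  is_rjcr p -> is_mobius_inverse p q -> is_dist nu -> is_transition t ->
  (forall (A B : {set X}) (x y : X), x \in A -> y \in B ->
     p x y A B = \sum_(r : linord X | Nset x A r) \sum_(r' : linord X | Nset y B r')
                   nu r * t x r r')
  <->
  (forall (A B : {set X}) (x y : X), x \in A -> y \in B ->
     q x y A B = \sum_(r : linord X | Iset x A r) \sum_(r' : linord X | Iset y B r')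
                   nu r * t x r r').
Proof.
move=> _ pq _ _; split=> [p_rep A B x y xA yB | q_rep A B x y xA yB].
  pose repI A' B' := \sum_(r | Iset x A' r) \sum_(r' | Iset y B' r') nu r * t x r r'.
  apply: subr0_eq.
  apply: (@supset_sum2_eq0 _ _ _ _ (fun A' B' => q x y A' B' - repI A' B')
            (up_closed_mem _ x) (up_closed_mem _ y) _ A B xA yB) => A' B' xA' yB'.
  under eq_bigr do rewrite sumrB.
  by rewrite sumrB -pq // -sum_Nset2 // -p_rep // subrr.
rewrite pq // sum_Nset2 //; apply: eq_bigr => A' /subsetP sAA'.
by apply: eq_bigr => B' /subsetP sBB'; rewrite q_rep ?sAA' ?sBB'.
Qed.
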